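(* Consider an AoI SHS as in the context with matrices $\mathbf{D}$ and $\mathbf{R}$ as defined there, and let $\bar{\mathbf{v}}^{0}=[\bar{\mathbf{v}}^{0}_{0}\ \cdots\ \bar{\mathbf{v}}^{0}_{q_{\max}}]$ be the stationary (duplicated) state-probability row vector. If $\bar{\mathbf{v}}^{0}>\mathbf{0}$ (componentwise) and there exists a non-negative row vector $\bar{\mathbf{v}}^{1}\in\mathbb{R}^{n|\mathcal{Q}|}$ solving $\bar{\mathbf{v}}^{1}\mathbf{D}=\bar{\mathbf{v}}^{0}+\bar{\mathbf{v}}^{1}\mathbf{R}$, then all eigenvalues of $\mathbf{R}-\mathbf{D}$ have strictly negative real parts.
   Context: An AoI SHS: discrete state $q(t)\in\mathcal{Q}=\{0,\ldots,q_{\max}\}$ is a finite-state continuous-time Markov chain with transitions $l\in\mathcal{L}$ from $q_l$ to $q'_l$ at fixed rates $\lambda^{(l)}>0$ (self-transitions and parallel transitions allowed); the continuous state $\mathbf{x}(t)\in\mathbb{R}^n$ grows at unit rate in each component between transitions and is reset to $\mathbf{x}\mathbf{A}_l$ at transition $l$, where $\mathbf{A}_l$ is an $n\times n$ binary matrix with at most one $1$ per column. Let $d_{\bar q}=\sum_{l:q_l=\bar q}\lambda^{(l)}$, $\mathbf{D}=\mathrm{diag}(d_0\mathbf{I}_n,\ldots,d_{q_{\max}}\mathbf{I}_n)$ (an $n|\mathcal{Q}|\times n|\mathcal{Q}|$ matrix), and let $\mathbf{R}$ be the block matrix with $n\times n$ blocks $\mathbf{R}_{i,j}=\sum_{l\in\mathcal{L}_{i,j}}\lambda^{(l)}\mathbf{A}_l$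 for $i,j\in\mathcal{Q}$, where $\mathcal{L}_{i,j}=\{l: q_l=i,q'_l=j\}$. The vector $\bar{\mathbf{v}}^{0}_{\bar q}=[1\ \cdots\ 1]\pi_{\bar q}\in\mathbb{R}^n$, where $\pi$ is a stationary distribution of $q(t)$. *)

(* Real scalars: any real closed field R (e.g. the reals);
   eigenvalues are taken in the complex numbers R[i] (mathcomp-real-closed). *)
From HB Require Import structures.
From mathcomp Require Import all_boot all_order all_algebra.
From mathcomp Require Export complex.
Set Implicit Arguments. Unset Strict Implicit. Unset Printing Implicit Defensive.
Import Order.TTheory GRing.Theory Num.Theory.
Local Open Scope ring_scope.

(* An AoI SHS with discrete states Q = 'I_Qn (Qn = q_max + 1), transitions
   l : 'I_L from src l to dst l at rate lam l, continuous state of dimension n,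
   reset matrices A l : 'M_n. *)

Definition reset_mx (R : rcfType) (n : nat) (A : 'M[R]_n) : Prop :=
  (forall i j, A i j = 0 \/ A i j = 1) /\
  (forall j i i', A i j = 1 -> A i' j = 1 -> i = i').

Definition exit_rate (R : rcfType) (Qn L : nat) (src : 'I_L -> 'I_Qn)
  (lam : 'I_L -> R) (q : 'I_Qn) : R :=
  \sum_(l < L | src l == q) lam l.

Definition generator (R : rcfType) (Qn L : nat) (src dst : 'I_L -> 'I_Qn)
  (lam : 'I_L -> R) : 'M[R]_Qn :=
  \matrix_(i, j) ((\sum_(l < L | (src l == i) && (dst l == j)) lam l)
                  - (i == j)%:R * exit_rate src lam i).

Definition stationary_dist (R : rcfType) (Qn L : nat) (src dst : 'I_L -> 'I_Qn)
  (lam : 'I_L -> R) (pi : 'rV[R]_Qn) : Prop :=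
  (forall q, 0 <= pi 0 q) /\ \sum_q pi 0 q = 1 /\
  pi *m generator src dst lam = 0.

Definition shsD (R : rcfType) (n Qn L : nat) (src : 'I_L -> 'I_Qn)
  (lam : 'I_L -> R) : 'M[R]_(\sum_(q < Qn) n) :=
  \mxdiag_(q < Qn) ((exit_rate src lam q)%:M : 'M[R]_n).

Definition shsR (R : rcfType) (n Qn L : nat) (src dst : 'I_L -> 'I_Qn)
  (lam : 'I_L -> R) (A : 'I_L -> 'M[R]_n) : 'M[R]_(\sum_(q < Qn) n) :=
  \mxblock_(i < Qn, j < Qn)
    (\sum_(l < L | (src l == i) && (dst l == j)) lam l *: A l : 'M[R]_n).

Definition shsv0 (R : rcfType) (n Qn : nat) (pi : 'rV[R]_Qn)
  : 'rV[R]_(\sum_(q < Qn) n) :=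
  \mxrow_(q < Qn) (const_mx (pi 0 q) : 'rV[R]_n).

(* A Metzler matrix M (nonnegative off the diagonal) admitting a nonnegative
   row vector v with v M < 0 is Hurwitz stable: for a left eigenvector w of
   eigenvalue z, pick the coordinate k maximising |w_k| / v_k; column k of
   w M = z w gives |z - M_kk| |w_k| <= sum_(i <> k) |w_i| M_ik, which is
   strictly less than -M_kk |w_k|, hence Re z < 0.  Here M = R - D is Metzler,
   and v1 (R - D) = -v0 < 0 is exactly the hypothesis on v1. *)
From HB Require Import structures.
From mathcomp Require Import all_boot all_order all_algebra.
From mathcomp Require Import complex.
From mathcomp Require Import ring.
Import Order.TTheory GRing.Theory Num.Theory.
Local Open Scope complex_scope.
Local Open Scope ring_scope.
Import ComplexField.Normc.

Section ComplexNorm.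
Variable R : rcfType.

(* [Rcomplex R] equips [R[i]] with [normc] as an [R]-valued norm. *)
Lemma normc_gt0 (x : R[i]) : (0 < normc x) = (x != 0).
Proof. exact: (@normr_gt0 R (Rcomplex R)). Qed.

Lemma normc_sum (I : Type) (r : seq I) (P : pred I) (F : I -> R[i]) :
  normc (\sum_(i <- r | P i) F i) <= \sum_(i <- r | P i) normc (F i).
Proof. exact: (@ler_norm_sum R (Rcomplex R)). Qed.

Lemma normc_real (x : R) : normc x%:C = `|x|.
Proof. by rewrite /normc /= expr0n /= addr0 sqrtr_sqr. Qed.

Lemma Re_le_normc (x : R[i]) : complex.Re x <= normc x.
Proof.
case: x => a b /=; apply: le_trans (ler_norm a) _.
by rewrite -sqrtr_sqr ler_sqrt ?lerDl ?sqr_ge0 ?addr_ge0 ?sqr_ge0.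
Qed.

End ComplexNorm.

Definition metzler {R : numDomainType} {N : nat} (M : 'M[R]_N) : Prop :=
  forall i k, i != k -> 0 <= M i k.

Section Metzler.
Variables (R : rcfType) (N : nat).
Implicit Types (M : 'M[R]_N) (v : 'rV[R]_N) (w : 'rV[R[i]]_N) (z : R[i]).

Lemma metzler_subinvariant_gt0 M v :
  metzler M -> (forall k, 0 <= v 0 k) -> (forall k, (v *m M) 0 k < 0) ->
  forall k, 0 < v 0 k.
Proof.
move=> M_metzler v_ge0 vM_lt0 k; rewrite lt_def v_ge0 andbT.
apply/eqP => vk0; move: (vM_lt0 k); rewrite mxE (bigD1 k) //= vk0 mul0r add0r.
by rewrite ltNge sumr_ge0 // => i ik; rewrite mulr_ge0 ?v_ge0 ?M_metzler.
Qed.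

Lemma metzler_eigen_col_bound M w z k :
  metzler M -> w *m map_mx (real_complex R) M = z *: w ->
  normc (z - (M k k)%:C) * normc (w 0 k) <=
    \sum_(i | i != k) normc (w 0 i) * M i k.
Proof.
move=> M_metzler /matrixP /(_ 0 k); rewrite !mxE (bigD1 k) //= mxE => eigen_k.
rewrite -normcM.
have -> : (z - (M k k)%:C) * w 0 k = \sum_(i | i != k) w 0 i * (M i k)%:C.
  rewrite mulrBl -eigen_k mulrC addrAC subrr add0r.
  by apply: eq_bigr => i _; rewrite mxE.
apply: le_trans; first exact: normc_sum.
apply: ler_sum => i ik.
by rewrite normcM normc_real ger0_norm ?M_metzler.
Qed.

Lemma metzler_eigenvalue_Re_lt0 M v z :
  metzler M -> (forall k, 0 <= v 0 k) -> (forall k, (v *m M) 0 k < 0) ->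
  eigenvalue (map_mx (real_complex R) M) z -> complex.Re z < 0.
Proof.
move=> M_metzler v_ge0 vM_lt0 /eigenvalueP [w eigen_w w_neq0].
have v_gt0 := metzler_subinvariant_gt0 _ _ M_metzler v_ge0 vM_lt0.
have [k0 wk0_neq0] : exists k0, w 0 k0 != 0.
  apply/existsP; apply: contraR w_neq0 => /existsPn w0.
  by apply/eqP/matrixP => i j; rewrite ord1 mxE; apply/eqP/negPn.
pose u k := normc (w 0 k).
have [k _ k_max] := arg_maxP (fun k => u k / v 0 k) (isT : predT k0).
set t := u k / v 0 k in k_max.
have t_gt0 : 0 < t.
  by apply: lt_le_trans (k_max k0 isT); rewrite divr_gt0 ?normc_gt0.
have uk_def : u k = t * v 0 k by rewrite /t mulrVK // unitfE gt_eqF.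
have u_le i : u i <= t * v 0 i by rewrite -ler_pdivrMr ?v_gt0 //; exact: k_max.
have gershgorin : normc (z - (M k k)%:C) * u k < - M k k * u k.
  apply: le_lt_trans (metzler_eigen_col_bound _ _ _ k M_metzler eigen_w) _.
  have off_diag : \sum_(i | i != k) v 0 i * M i k = (v *m M) 0 k - v 0 k * M k k.
    by rewrite mxE [in RHS](bigD1 k) //= addrAC subrr add0r.
  apply: le_lt_trans (_ : t * ((v *m M) 0 k - v 0 k * M k k) < _).
    rewrite -off_diag mulr_sumr; apply: ler_sum => i ik.
    by rewrite mulrA ler_wpM2r ?M_metzler ?u_le.
  rewrite uk_def mulrBr ltrBlDr.
  have -> : - M k k * (t * v 0 k) + t * (v 0 k * M k k) = 0 by ring.
  by rewrite pmulr_rlt0.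
have uk_gt0 : 0 < u k by rewrite uk_def mulr_gt0.
rewrite ltr_pM2r // in gershgorin.
have := le_lt_trans (Re_le_normc _ _) gershgorin.
by rewrite raddfB /= ltrBlDr addNr.
Qed.

End Metzler.

Lemma is_diag_mxdiag (V : nmodType) (p : nat) (p_ : 'I_p -> nat)
    (B_ : forall i, 'M[V]_(p_ i)) :
  (forall i, is_diag_mx (B_ i)) -> is_diag_mx (\mxdiag_i B_ i).
Proof.
move=> B_diag; apply/is_diag_mxblockP; split=> [i j /negbTE -> //|i].
by rewrite eqxx conform_mx_id.
Qed.

Lemma mxblock_ge0 (R : numDomainType) (p q : nat) (p_ : 'I_p -> nat)
    (q_ : 'I_q -> nat) (B_ : forall i j, 'M[R]_(p_ i, q_ j)) :
  (forall i j a b, 0 <= B_ i j a b) ->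
  forall s t, 0 <= (\mxblock_(i, j) B_ i j) s t.
Proof. by move=> B_ge0 s t; rewrite mxE. Qed.

Lemma reset_mx_ge0 (R : rcfType) (n : nat) (A : 'M[R]_n) i j :
  reset_mx A -> 0 <= A i j.
Proof. by case=> /(_ i j) [] ->. Qed.

Lemma shsR_ge0 (R : rcfType) (n Qn L : nat) (src dst : 'I_L -> 'I_Qn)
    (lam : 'I_L -> R) (A : 'I_L -> 'M[R]_n) i k :
  (forall l, 0 < lam l) -> (forall l, reset_mx (A l)) ->
  0 <= shsR src dst lam A i k.
Proof.
move=> lam_gt0 A_reset; apply: mxblock_ge0 => q q' a b.
rewrite summxE sumr_ge0 // => l _.
by rewrite mxE; apply: mulr_ge0; [exact: ltW | exact: reset_mx_ge0].
Qed.

Lemma metzler_shsRD (R : rcfType) (n Qn L : nat) (src dst : 'I_L -> 'I_Qn)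
    (lam : 'I_L -> R) (A : 'I_L -> 'M[R]_n) :
  (forall l, 0 < lam l) -> (forall l, reset_mx (A l)) ->
  metzler (shsR src dst lam A - shsD n src lam).
Proof.
move=> lam_gt0 A_reset i k ik.
have /is_diag_mxP D_diag : is_diag_mx (shsD n src lam).
  by apply: is_diag_mxdiag => q; apply: scalar_mx_is_diag.
rewrite mxE [X in _ + X]mxE (D_diag i k ik) oppr0 addr0.
exact: shsR_ge0.
Qed.

Theorem lemma2 (R : rcfType) (n Qn L : nat) (src dst : 'I_L -> 'I_Qn)
  (lam : 'I_L -> R) (A : 'I_L -> 'M[R]_n) (pi : 'rV[R]_Qn)
  (v1 : 'rV[R]_(\sum_(q < Qn) n)) :
  (forall l, 0 < lam l) ->
  (forall l, reset_mx (A l)) ->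
  stationary_dist src dst lam pi ->
  (forall k, 0 < shsv0 n pi 0 k) ->
  (forall k, 0 <= v1 0 k) ->
  v1 *m shsD n src lam = shsv0 n pi + v1 *m shsR src dst lam A ->
  forall z : R[i],
    eigenvalue (map_mx (real_complex R) (shsR src dst lam A - shsD n src lam)) z ->
    @complex.Re R z < 0.
Proof.
move=> lam_gt0 A_reset _ v0_gt0 v1_ge0 v1_eq z.
apply: metzler_eigenvalue_Re_lt0 v1_ge0 _; first exact: metzler_shsRD.
move=> k; rewrite mulmxBr v1_eq opprD addrCA subrr addr0 mxE oppr_lt0.
exact: v0_gt0.
Qed.
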